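(* Let $\Gamma$ be a totally ordered additive abelian group, let $\mathsf{M}=(E,\nu_{\mathsf{M}})$ be a valuated matroid of rank $r$ on a finite set $E$ with values in $\overline{\Gamma}$, and let $\widetilde{\nu}_{\mathsf{M}}\colon\binom{E}{\leq r}\to\overline{\Gamma}$ be given by $\widetilde{\nu}_{\mathsf{M}}(S)=\min\{\nu_{\mathsf{M}}(B)\mid B\in\binom{E}{r},\ S\subseteq B\}$. Let $Q$ be a finite set disjoint from $E$ and $\widetilde{E}=Q\sqcup E$. Define $\nu_{\widetilde{\mathsf{M}}}\colon\binom{\widetilde{E}}{r}\to\overline{\Gamma}$ by $\nu_{\widetilde{\mathsf{M}}}(\widetilde{S})=\widetilde{\nu}_{\mathsf{M}}(\widetilde{S}\cap E)$. Then $\nu_{\widetilde{\mathsf{M}}}$ is a valuated matroid of rank $r$ on $\widetilde{E}$.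
   Context: $\overline{\Gamma}=\Gamma\sqcup\{\infty\}$ with $\infty$ larger than every element of $\Gamma$. $\binom{X}{r}$ and $\binom{X}{\leq r}$ denote the sets of subsets of $X$ with exactly $r$, resp. at most $r$, elements. A valuated matroid of rank $r$ on a finite set $X$ is a map $\nu\colon\binom{X}{r}\to\overline{\Gamma}$, not identically $\infty$, such that for all $S,T\in\binom{X}{r}$ and every $s\in S- T$ there is $t\in T- S$ with $\nu(S)+\nu(T)\geq\nu(S-\{s\}\cup\{t\})+\nu(T-\{t\}\cup\{s\})$. *)

From mathcomp Require Import all_boot all_order all_algebra.
Set Implicit Arguments. Unset Strict Implicit. Unset Printing Implicit Defensive.
Import GRing.Theory.
Local Open Scope ring_scope.

Definition totally_ordered_group (G : zmodType) (le : rel G) : Prop :=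
  [/\ reflexive le, antisymmetric le, transitive le, total le &
      forall a b c : G, le a b -> le (a + c) (b + c)].

(* Gamma-bar = Gamma ⊔ {oo}, encoded as option G with None = oo. *)
Definition oadd (G : zmodType) (x y : option G) : option G :=
  match x, y with Some a, Some b => Some (a + b) | _, _ => None end.

Definition ole (G : zmodType) (le : rel G) (x y : option G) : bool :=
  match x, y with
  | _, None => true
  | None, Some _ => false
  | Some a, Some b => le a b
  end.

Definition omin (G : zmodType) (le : rel G) (x y : option G) : option G :=
  if ole le x y then x else y.

(* valuated matroid of rank r on the finite set X (a finType);
   nu is only considered on r-element subsets *)
Definition valuated_matroid (G : zmodType) (le : rel G) (X : finType) (r : nat)
    (nu : {set X} -> option G) : Prop :=
  (exists S : {set X}, #|S| = r /\ nu S <> None) /\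
  forall S T : {set X}, #|S| = r -> #|T| = r ->
    forall s, s \in S :\: T ->
      exists2 t, t \in T :\: S &
        ole le (oadd (nu ((S :\ s) :|: [set t])) (nu ((T :\ t) :|: [set s])))
               (oadd (nu S) (nu T)).

(* nu-tilde(S) = min { nu(B) | #|B| = r, S \subset B } (min of empty = oo) *)
Definition nu_tilde (G : zmodType) (le : rel G) (X : finType) (r : nat)
    (nu : {set X} -> option G) (S : {set X}) : option G :=
  \big[omin le/None]_(B : {set X} | (#|B| == r) && (S \subset B)) nu B.

(* E-tilde = Q ⊔ E as the sum type Q + E; S-tilde ∩ E as a subset of E *)
Definition inter_E (Q E : finType) (S : {set Q + E}) : {set E} :=
  [set e | inr e \in S].

Definition nu_ext (G : zmodType) (le : rel G) (Q E : finType) (r : nat)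
    (nu : {set E} -> option G) (S : {set Q + E}) : option G :=
  nu_tilde le r nu (inter_E S).

From Pilot Require Import Defs.
From mathcomp Require Import all_boot all_order all_algebra.
From mathcomp Require Import zify.
Set Implicit Arguments. Unset Strict Implicit. Unset Printing Implicit Defensive.
Import GRing.Theory.

(* Write f for nu-tilde and A_E for the trace on E of a subset A of Q + E.  Given
   S, T, s with f(S_E) + f(T_E) = v finite, fix a basis B of minimal value containing
   (S - s)_E, and call a basis C containing (T + s)_E admissible if
   nu(B) + nu(C) <= v.  If some t in T - S fits into B together with (S - s)_E, the pair
   (B, C) already witnesses the exchange at t.  Otherwise T - S lies in C - B, and
   counting yields x in B - C outside S.  The exchange axiom for B, C at x then gives
   either the required t, or an admissible C' meeting B in one more element (the
   minimality of nu(B) preserves the bound), or s itself.  In the last case a second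
   such x' exists; the crossed pair (B - x + s, C - s + x') still has value at most v,
   and a third exchange at s settles it.  An admissible C comes from optimal bases for
   S_E and T_E by at most one exchange. *)

Section OrderedGroup.
Variables (G : zmodType) (le : rel G).
Hypothesis hG : totally_ordered_group le.

Lemma le_refl a : le a a. Proof. by case: hG. Qed.

Lemma le_trans b a c : le a b -> le b c -> le a c.
Proof. by case: hG => _ _ leT _ _; apply: leT. Qed.

Lemma le_total a b : le a b || le b a. Proof. by case: hG. Qed.

Lemma leD a b c d : le a b -> le c d -> le (a + c)%R (b + d)%R.
Proof.
case: hG => _ _ _ _ leDr lab lcd.
apply: le_trans (leDr _ _ _ lab) _; rewrite ![(b + _)%R]addrC; exact: leDr.
Qed.

Lemma leD2r a b c : le (a + c)%R (b + c)%R -> le a b.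
Proof. by case: hG => _ _ _ _ leDr /(leDr _ _ (- c)%R); rewrite !addrK. Qed.

Local Notation ole := (ole le).
Local Notation omin := (omin le).

Lemma ole_refl x : ole x x. Proof. by case: x => //= a; apply: le_refl. Qed.

Lemma ole_trans y x z : ole x y -> ole y z -> ole x z.
Proof. by case: x; case: y; case: z => //= c b a; apply: le_trans. Qed.

Lemma ole_total x y : ole x y || ole y x.
Proof. by case: x; case: y => //= b a; apply: le_total. Qed.

Lemma oleD x y z w : ole x y -> ole z w -> ole (oadd x z) (oadd y w).
Proof. by case: x; case: y; case: z; case: w => //= *; apply: leD. Qed.

Lemma omin_lel x y : ole (omin x y) x.
Proof.
rewrite /Defs.omin; case: ifP => [_|xy]; first exact: ole_refl.
by have := ole_total x y; rewrite xy.
Qed.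

Lemma omin_ler x y : ole (omin x y) y.
Proof. by rewrite /Defs.omin; case: ifP => // _; apply: ole_refl. Qed.

Lemma bigmin_le (I : eqType) (s : seq I) (P : pred I) (F : I -> option G) j :
  j \in s -> P j -> ole (\big[omin/None]_(i <- s | P i) F i) (F j).
Proof.
elim: s => // i s IH; rewrite inE big_cons => /orP[/eqP<- -> | js Pj].
  exact: omin_lel.
by case: ifP => _; [apply: ole_trans (omin_ler _ _) (IH js Pj) | apply: IH].
Qed.

Lemma bigmin_attained (I : eqType) (s : seq I) (P : pred I) (F : I -> option G) :
  \big[omin/None]_(i <- s | P i) F i != None ->
  exists2 i, (i \in s) && P i & \big[omin/None]_(i <- s | P i) F i = F i.
Proof.
elim: s => [|i s IH]; first by rewrite big_nil.
rewrite big_cons; case: ifP => Pi; last first.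
  by move=> /IH[j /andP[js Pj] ->]; exists j; rewrite // inE js orbT.
rewrite /Defs.omin; case: ifP => _ => [_|/IH[j /andP[js Pj] ->]].
  by exists i; rewrite // inE eqxx.
by exists j; rewrite // inE js orbT.
Qed.

(* Cancel [a2 + b1 >= c + d] from [(a1 + b2) + (a2 + b1) = (a1 + b1) + (a2 + b2) <= 2 (c + d)]. *)
Lemma oadd_crossed_le a b a1 b1 a2 b2 c d v :
  oadd c d = Some v -> ole (oadd a b) (Some v) ->
  ole (oadd a1 b1) (oadd a b) -> ole (oadd a2 b2) (oadd a b) ->
  ole c a2 -> ole d b1 -> ole (oadd a1 b2) (Some v).
Proof.
case: c d => [c|] [d|] //= [<-] {v}.
case: a b a1 b1 a2 b2 => [a|] [b|] [a1|] [b1|] [a2|] [b2|] //= h h1 h2 hc hd.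
apply: (@leD2r _ _ (c + d)%R); apply: le_trans (leD (le_refl _) (leD hc hd)) _.
rewrite addrACA [(b2 + _)%R]addrC addrACA.
exact: le_trans (leD h1 h2) (leD h h).
Qed.

End OrderedGroup.

Section Swap.
Variable T : finType.
Implicit Types (A B C X : {set T}) (x y : T).

Lemma card_swap A x y : x \in A -> y \notin A -> #|A :\ x :|: [set y]| = #|A|.
Proof. by move=> xA yA; rewrite setUC cardsU1 (cardsD1 x A) xA !inE negb_and yA orbT. Qed.

Lemma cardsD_sym A B : #|A| = #|B| -> #|A :\: B| = #|B :\: A|.
Proof. by move=> AB; rewrite !cardsD AB setIC. Qed.

Lemma subsetU1_swap X A x y :
  X \subset A -> x \notin X -> X :|: [set y] \subset A :\ x :|: [set y].
Proof.
move=> XA xX; apply: setSU; apply/subsetP => z zX.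
by rewrite !inE (subsetP XA _ zX) andbT; apply: contraNneq xX => <-.
Qed.

Lemma subset_swap X A x y : X \subset A -> x \notin X -> X \subset A :\ x :|: [set y].
Proof. by move=> XA xX; apply: subset_trans (subsetU1_swap y XA xX); apply: subsetUl. Qed.

Lemma subsetD1_swap X A x y : X \subset A -> X :\ y \subset A :\ y :|: [set x].
Proof. by move=> XA; apply: subset_trans (setSD _ XA) (subsetUl _ _). Qed.

Lemma subsetU1D1_swap X A x y : X \subset A -> (X :|: [set y]) :\ x \subset A :\ x :|: [set y].
Proof. by move=> XA; rewrite setDUl setUSS ?subD1set ?setSD. Qed.

Lemma exists_notin_card_lt X A : #|X| < #|A| -> exists2 x, x \in A & x \notin X.
Proof.
move=> XA; apply/subsetPn; apply: contraTN XA => /subset_leq_card.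
by rewrite leqNgt.
Qed.

Lemma card_setI_lt A B B' x :
  x \in A -> x \notin B -> x \in B' -> A :&: B \subset B' -> #|A :&: B| < #|A :&: B'|.
Proof.
move=> xA xB xB' AB; apply: proper_card; apply/properP; split.
  by rewrite subsetI subsetIl.
by exists x; rewrite !inE ?xA ?xB ?xB' ?andbF.
Qed.

End Swap.

Section TraceOnE.
Variables (Q E : finType).
Implicit Types (A B : {set Q + E}) (y : E).

Lemma in_inter_E A y : (y \in inter_E A) = (inr y \in A).
Proof. by rewrite inE. Qed.

Lemma inter_ES A B : A \subset B -> inter_E A \subset inter_E B.
Proof. by move=> AB; apply/subsetP => y; rewrite !in_inter_E; apply: (subsetP AB). Qed.

Lemma inter_E_setU1_inr A y : inter_E (A :|: [set inr y]) = inter_E A :|: [set y].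
Proof. by apply/setP => z; rewrite !inE (inj_eq (@inr_inj Q E)). Qed.

Lemma inter_E_setU1_inl A q : inter_E (A :|: [set inl q]) = inter_E A.
Proof. by apply/setP => z; rewrite !inE orbF. Qed.

Lemma inter_E_imset (X : {set E}) : inter_E [set (inr x : Q + E) | x in X] = X.
Proof.
apply/setP => y; rewrite in_inter_E.
by apply/imsetP/idP => [[x xX [->]] // | yX]; exists y.
Qed.

Lemma card_inter_E A : #|inter_E A| <= #|A|.
Proof.
rewrite -(card_imset _ (@inr_inj Q E)); apply: subset_leq_card.
by apply/subsetP => _ /imsetP[y yA ->]; rewrite -in_inter_E.
Qed.

Lemma card_inter_E_inr A : (forall t, t \in A -> exists y, t = inr y) -> #|inter_E A| = #|A|.
Proof.
move=> Ainr; apply/eqP; rewrite eqn_leq card_inter_E /=.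
rewrite -(card_imset _ (@inr_inj Q E)); apply: subset_leq_card.
by apply/subsetP => t tA; have [y ty] := Ainr t tA; rewrite ty imset_f // in_inter_E -ty.
Qed.

End TraceOnE.

Section Extension.
Variables (G : zmodType) (le : rel G).
Hypothesis hG : totally_ordered_group le.
Variables (E Q : finType) (r : nat) (nu : {set E} -> option G).
Hypothesis hM : valuated_matroid le r nu.

Local Notation ole := (ole le).
Local Notation f := (nu_tilde le r nu).

Lemma nu_tilde_le (A B : {set E}) : #|B| = r -> A \subset B -> ole (f A) (nu B).
Proof. by move=> Br AB; apply: (bigmin_le hG); rewrite ?mem_index_enum ?Br ?eqxx. Qed.

Lemma nu_tilde_attained (A : {set E}) :
  f A != None -> exists2 B : {set E}, (#|B| == r) && (A \subset B) & nu B = f A.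
Proof. by rewrite /nu_tilde => /bigmin_attained[B /andP[_ BA] ->]; exists B. Qed.

Section Exchange.
Variables (S T : {set Q + E}) (s : Q + E) (v : G).
Hypotheses (hS : #|S| = r) (hT : #|T| = r) (hs : s \in S :\: T).
Hypothesis hV : oadd (f (inter_E S)) (f (inter_E T)) = Some v.

Local Notation X0 := (inter_E (S :\ s)).
Local Notation Y0 := (inter_E (T :|: [set s])).

Definition exchange_witness := exists2 t, t \in T :\: S &
  ole (oadd (nu_ext le r nu (S :\ s :|: [set t])) (nu_ext le r nu (T :\ t :|: [set s])))
      (Some v).

Lemma s_in_S : s \in S. Proof. by case/setDP: hs. Qed.
Lemma s_notin_T : s \notin T. Proof. by case/setDP: hs. Qed.

Lemma inter_E_Ts e : s = inr e -> Y0 = inter_E T :|: [set e].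
Proof. by move=> ->; rewrite inter_E_setU1_inr. Qed.

Lemma inter_E_swap_T y : inr y \in T -> inter_E (T :\ inr y :|: [set s]) = Y0 :\ y.
Proof.
move=> yT; apply/setP => z; rewrite !inE.
case: (eqVneq z y) => [->|zy]; last by rewrite (inj_eq (@inr_inj Q E)) zy.
by rewrite eqxx /=; apply/negbTE; apply: contraTneq yT => ->; apply: s_notin_T.
Qed.

Lemma witness_of_bases t (B1 C1 : {set E}) : t \in T :\: S -> #|B1| = r -> #|C1| = r ->
  inter_E (S :\ s :|: [set t]) \subset B1 -> inter_E (T :\ t :|: [set s]) \subset C1 ->
  ole (oadd (nu B1) (nu C1)) (Some v) -> exchange_witness.
Proof.
move=> tTS B1r C1r SB1 TC1 h; exists t => //.
by apply: (ole_trans hG) h; apply: (oleD hG); apply: nu_tilde_le.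
Qed.

Lemma witness_of_swap (B C : {set E}) x y :
  #|B| = r -> #|C| = r -> X0 \subset B -> Y0 :\ y \subset C :\ y :|: [set x] ->
  x \in B :\: C -> x \notin X0 -> y \in C :\: B -> inr y \in T ->
  ole (oadd (nu (B :\ x :|: [set y])) (nu (C :\ y :|: [set x]))) (Some v) ->
  exchange_witness.
Proof.
move=> Br Cr XB YC /setDP[xB xC] xX /setDP[yC yB] yT h.
apply: (witness_of_bases (t := inr y)) h.
- rewrite inE yT andbT; apply: contra yB => yS; apply: (subsetP XB).
  by rewrite in_inter_E !inE yS andbT; apply: contraTneq yT => ->; apply: s_notin_T.
- by rewrite card_swap.
- by rewrite card_swap.
- by rewrite inter_E_setU1_inr subsetU1_swap.
- by rewrite inter_E_swap_T.
Qed.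

Section Improvement.
Variable B : {set E}.
Hypotheses (hB : #|B| = r) (hXB : X0 \subset B) (hBmin : nu B = f X0).

Lemma nu_B_min (D : {set E}) : #|D| = r -> X0 \subset D -> ole (nu B) (nu D).
Proof. by rewrite hBmin; apply: nu_tilde_le. Qed.

Definition admissible (C : {set E}) :=
  [/\ #|C| = r, Y0 \subset C & ole (oadd (nu B) (nu C)) (Some v)].

Definition improvable (C : {set E}) :=
  exists2 C', admissible C' & #|B :&: C| < #|B :&: C'|.

Lemma improvable_swap C x y : admissible C -> x \in B :\: C -> x \notin X0 ->
  y \in C :\: B -> y \notin Y0 ->
  ole (oadd (nu (B :\ x :|: [set y])) (nu (C :\ y :|: [set x]))) (oadd (nu B) (nu C)) ->
  improvable C.
Proof.
move=> [Cr YC hBC] /setDP[xB xC] xX /setDP[yC yB] yY hex.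
exists (C :\ y :|: [set x]); last first.
  apply: (card_setI_lt xB xC); first by rewrite !inE eqxx orbT.
  apply/subsetP => z /setIP[zB zC]; rewrite !inE zC andbT.
  by apply/orP; left; apply: contraNneq yB => <-.
split; [by rewrite card_swap | exact: subset_swap |].
apply: (ole_trans hG) hBC; apply: (ole_trans hG) hex; apply: (oleD hG) (ole_refl hG _).
by apply: nu_B_min; [rewrite card_swap | apply: subset_swap].
Qed.

Lemma single_exchange C x : admissible C -> x \in B :\: C -> x \notin X0 ->
  [\/ exchange_witness, improvable C |
      exists2 e, s = inr e & e \in C :\: B /\
        ole (oadd (nu (B :\ x :|: [set e])) (nu (C :\ e :|: [set x]))) (oadd (nu B) (nu C))].
Proof.
move=> hC xBC xX; have [Cr YC hBC] := hC.
have [y yCB hex] := hM.2 B C hB Cr x xBC.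
case yT: (inr y \in T).
  apply: Or31; apply: (witness_of_swap hB Cr hXB _ xBC xX yCB yT).
    exact: subsetD1_swap.
  exact: (ole_trans hG) hex hBC.
case yY: (y \in Y0); last by apply: Or32; apply: improvable_swap hC xBC xX yCB (negbT yY) hex.
by apply: Or33; exists y => //; move: yY; rewrite in_inter_E !inE yT => /eqP.
Qed.

Lemma crossed_swap_le C x1 x2 e : admissible C ->
  x1 \notin C -> x2 \in B -> x2 \notin X0 -> s = inr e -> e \in C :\: B ->
  ole (oadd (nu (B :\ x1 :|: [set e])) (nu (C :\ e :|: [set x1]))) (oadd (nu B) (nu C)) ->
  ole (oadd (nu (B :\ x2 :|: [set e])) (nu (C :\ e :|: [set x2]))) (oadd (nu B) (nu C)) ->
  ole (oadd (nu (B :\ x1 :|: [set e])) (nu (C :\ e :|: [set x2]))) (Some v).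
Proof.
move=> [Cr YC hBC] x1C x2B x2X se /setDP[eC eB] hex1 hex2.
apply: (oadd_crossed_le hG hV hBC hex1 hex2); apply: nu_tilde_le.
- by rewrite card_swap.
- by rewrite -(setD1K s_in_S) setUC se inter_E_setU1_inr -se subsetU1_swap.
- by rewrite card_swap.
- apply: subset_swap; last by rewrite in_inter_E -se s_notin_T.
  by apply: subset_trans YC; rewrite (inter_E_Ts se) subsetUl.
Qed.

Lemma double_exchange C x1 x2 e : admissible C ->
  x1 \in B :\: C -> x1 \notin X0 -> x2 \in B :\: C -> x2 \notin X0 -> x1 != x2 ->
  s = inr e -> e \in C :\: B ->
  ole (oadd (nu (B :\ x1 :|: [set e])) (nu (C :\ e :|: [set x1]))) (oadd (nu B) (nu C)) ->
  ole (oadd (nu (B :\ x2 :|: [set e])) (nu (C :\ e :|: [set x2]))) (oadd (nu B) (nu C)) ->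
  exchange_witness \/ improvable C.
Proof.
move=> hC /setDP[x1B x1C] x1X /setDP[x2B x2C] x2X x12 se eCB hex1 hex2.
have hB1C2 := crossed_swap_le hC x1C x2B x2X se eCB hex1 hex2.
have [Cr YC _] := hC; have /setDP[eC eB] := eCB.
have eX : e \notin X0 by rewrite in_inter_E -se !inE eqxx.
have TC : inter_E T \subset C by apply: subset_trans YC; rewrite (inter_E_Ts se) subsetUl.
set B1 := B :\ x1 :|: [set e] in hB1C2 *; set C2 := C :\ e :|: [set x2] in hB1C2 *.
have B1r : #|B1| = r by rewrite card_swap.
have C2r : #|C2| = r by rewrite card_swap.
have XB1 : X0 \subset B1 by apply: subset_swap.
have TC2 : inter_E T \subset C2 by apply: subset_swap; rewrite // in_inter_E -se s_notin_T.
have eB1C2 : e \in B1 :\: C2.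
  by rewrite !inE !eqxx orbT andbT /=; apply: contraNneq eB => ->.
have [u uC2B1 hex3] := hM.2 B1 C2 B1r C2r e eB1C2.
have /setDP[eB1 eC2] := eB1C2; have /setDP[uC2 uB1] := uC2B1.
have [ue uC] : u != e /\ u \in C.
  move: uC2; rewrite !inE => /orP[/andP[] // | /eqP ux2].
  by move: uB1; rewrite ux2 !inE x2B eq_sym x12.
have uB : u \notin B.
  apply: contra uB1 => uB; rewrite !inE uB andbT.
  by apply/orP; left; apply: contraNneq x1C => <-.
set B3 := B1 :\ e :|: [set u]; set C3 := C2 :\ u :|: [set e].
have hB3C3 : ole (oadd (nu B3) (nu C3)) (Some v) := ole_trans hG hex3 hB1C2.
case uT: (inr u \in T).
  left; apply: (witness_of_swap B1r C2r XB1 _ eB1C2 eX uC2B1 uT hB3C3).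
  by rewrite (inter_E_Ts se); apply: subsetU1D1_swap.
right; exists C3.
  split; first by rewrite card_swap.
    by rewrite (inter_E_Ts se); apply: subsetU1_swap; rewrite ?in_inter_E ?uT.
  apply: (ole_trans hG) hB3C3; apply: (oleD hG) (ole_refl hG _).
  by apply: nu_B_min; [rewrite card_swap | apply: subset_swap].
apply: (card_setI_lt x2B x2C).
  by rewrite !inE eqxx orbT andbT; apply/orP; left; apply: contraNneq uB => <-.
apply/subsetP => z /setIP[zB zC].
by rewrite !inE zC (memPn uB _ zB) (memPn eB _ zB).
Qed.

Lemma card_CB_lt C : admissible C -> #|C :\: B| < #|(B :\: C) :\: X0| + #|S :\: T|.
Proof.
move=> [Cr YC _]; rewrite -(cardsD_sym (A := B)) ?hB ?Cr //.
rewrite -(cardsID X0 (B :\: C)) addnC ltn_add2l.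
have BCX : (B :\: C) :&: X0 \subset inter_E ((S :\: T) :\ s).
  apply/subsetP => z; rewrite !inE => /andP[/andP[zC _] /andP[zs zS]].
  rewrite zs zS andbT /=; apply: contra zC => zT; apply: (subsetP YC).
  by rewrite in_inter_E !inE zT.
apply: leq_ltn_trans (subset_leq_card BCX) _; apply: leq_ltn_trans (card_inter_E _) _.
by rewrite (cardsD1 s (S :\: T)) hs.
Qed.

Lemma witness_or_improvable C : admissible C -> exchange_witness \/ improvable C.
Proof.
move=> hC; have [Cr YC hBC] := hC.
case: (pickP [pred t | (t \in T :\: S) && (inter_E (S :\ s :|: [set t]) \subset B)]).
  move=> t /andP[tTS tB]; left; apply: (witness_of_bases tTS hB Cr tB _ hBC).
  by apply: subset_trans YC; apply/inter_ES/setSU/subD1set.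
move=> noB; have TS_inr t : t \in T :\: S -> exists2 y, t = inr y & y \notin B.
  move=> tTS; have := noB t; rewrite /= tTS /=.
  case: t {tTS} => [q|y]; first by rewrite inter_E_setU1_inl hXB.
  by rewrite inter_E_setU1_inr subUset hXB sub1set => /negbT; exists y.
have U_sub : inter_E (T :\: S) \subset C :\: B.
  apply/subsetP => z; rewrite in_inter_E => zTS; have [_ [<-] zB] := TS_inr _ zTS.
  rewrite inE zB (subsetP YC) // in_inter_E !inE.
  by case/setDP: zTS => ->.
have U_card : #|inter_E (T :\: S)| = #|S :\: T|.
  rewrite card_inter_E_inr; first by apply: cardsD_sym; rewrite hT hS.
  by move=> t /TS_inr[y ->]; exists y.
have D_card := card_CB_lt hC; have U_le := subset_leq_card U_sub.
have /card_gt0P[x /setDP[xBC xX]] : 0 < #|(B :\: C) :\: X0| by lia.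
case: (single_exchange hC xBC xX) => [||[e se [eCB hex1]]]; [by left | by right |].
have eU : e \notin inter_E (T :\: S) by rewrite in_inter_E -se !inE (negbTE s_notin_T) andbF.
have : #|[set x]| < #|(B :\: C) :\: X0|.
  have := subset_leq_card (_ : e |: inter_E (T :\: S) \subset C :\: B).
  by rewrite cardsU1 eU U_card cards1 subUset sub1set eCB U_sub => /(_ isT); lia.
case/exists_notin_card_lt => x2 /setDP[x2BC x2X]; rewrite inE => x2x.
case: (single_exchange hC x2BC x2X) => [||[e2 se2 [_ hex2]]]; [by left | by right |].
move: se2; rewrite se => -[e2e]; rewrite -e2e in hex2.
by apply: double_exchange hC xBC xX x2BC x2X _ se eCB hex1 hex2; rewrite eq_sym.
Qed.

Lemma witness_of_admissible C : admissible C -> exchange_witness.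
Proof.
move=> hC; have [n] := ubnP (r - #|B :&: C|); elim: n C hC => // n IH C hC lt.
case: (witness_or_improvable hC) => // -[C' hC' lt'].
apply: IH hC' _; have : #|B :&: C'| <= r by rewrite -hB subset_leq_card ?subsetIl.
lia.
Qed.

End Improvement.

Lemma exchange_witness_exists : exchange_witness.
Proof.
have fS : f (inter_E S) != None by move: hV; case: (f (inter_E S)).
have fT : f (inter_E T) != None by move: hV; case: (f (inter_E T)); case: (f _).
have [BX /andP[/eqP BXr SBX] nuBX] := nu_tilde_attained fS.
have [CY /andP[/eqP CYr TCY] nuCY] := nu_tilde_attained fT.
have hVBC : oadd (nu BX) (nu CY) = Some v by rewrite nuBX nuCY.
have XBX : X0 \subset BX by apply: subset_trans (inter_ES (subD1set S s)) SBX.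
have fX : f X0 != None.
  by have := nu_tilde_le BXr XBX; rewrite nuBX; case: (f X0); case: (f _) fS.
have [B /andP[/eqP Br XB] eB] := nu_tilde_attained fX.
case: (boolP (Y0 \subset CY)) => [YC | /subsetPn[e eY eCY]].
  apply: (witness_of_admissible Br XB eB (C := CY)); split => //.
  rewrite -hVBC; apply: (oleD hG) (ole_refl hG _).
  by rewrite eB; apply: nu_tilde_le.
have se : s = inr e.
  move: eY; rewrite in_inter_E !inE => /orP[eT|/eqP <- //].
  by rewrite (subsetP TCY) ?in_inter_E in eCY.
have eBXCY : e \in BX :\: CY by rewrite inE eCY (subsetP SBX) // in_inter_E -se s_in_S.
have eX : e \notin X0 by rewrite in_inter_E -se !inE eqxx.
have [u uCB hex] := hM.2 BX CY BXr CYr e eBXCY.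
case uT: (inr u \in T).
  apply: (witness_of_swap BXr CYr XBX _ eBXCY eX uCB uT); last by rewrite -hVBC.
  by rewrite (inter_E_Ts se); apply: subsetU1D1_swap.
apply: (witness_of_admissible Br XB eB (C := CY :\ u :|: [set e])).
have /setDP[uCY uBX] := uCB; have /setDP[eBX _] := eBXCY.
split; first by rewrite card_swap.
  by rewrite (inter_E_Ts se); apply: subsetU1_swap; rewrite ?in_inter_E ?uT.
rewrite -hVBC; apply: (ole_trans hG) hex; apply: (oleD hG) (ole_refl hG _).
by rewrite eB; apply: nu_tilde_le; [rewrite card_swap | apply: subset_swap].
Qed.

End Exchange.

Lemma nu_ext_exchange (S T : {set Q + E}) : #|S| = r -> #|T| = r ->
  forall s, s \in S :\: T -> exists2 t, t \in T :\: S &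
    ole (oadd (nu_ext le r nu (S :\ s :|: [set t])) (nu_ext le r nu (T :\ t :|: [set s])))
        (oadd (nu_ext le r nu S) (nu_ext le r nu T)).
Proof.
move=> hS hT s hs; case hV: (oadd (nu_ext le r nu S) (nu_ext le r nu T)) => [v|].
  exact: exchange_witness_exists hS hT hs hV.
have /card_gt0P[t tTS] : 0 < #|T :\: S|.
  by rewrite (cardsD_sym (A := T)) ?hS ?hT //; apply/card_gt0P; exists s.
by exists t => //; case: (oadd _ _).
Qed.

Lemma nu_ext_nondegenerate :
  exists S : {set Q + E}, #|S| = r /\ nu_ext le r nu S <> None.
Proof.
have [[B [Br nuB]] _] := hM.
exists [set inr x | x in B]; split; first by rewrite card_imset //; apply: inr_inj.
rewrite /nu_ext inter_E_imset.
by have := nu_tilde_le Br (subxx B); case: (f B); case: (nu B) nuB.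
Qed.

End Extension.

Unset Implicit Arguments.

Theorem proposition1p1 (G : zmodType) (le : rel G)
  (hG : totally_ordered_group le)
  (E Q : finType) (r : nat) (nu : {set E} -> option G)
  (hM : valuated_matroid le r nu) :
  valuated_matroid le r (nu_ext (Q := Q) le r nu).
Proof. by split; [apply: nu_ext_nondegenerate | apply: nu_ext_exchange]. Qed.
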